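(* Let $p$ be a prime, $G$ a finitely generated group and $A\le \mathrm{Aut}(G)$ a subgroup. Then: (1) $\theta_1(A)\le\mathrm{Aut}(L_1^p(G))$ is a finite $p$-group if and only if $\theta_n(A)\le\mathrm{Aut}(L_n^p(G))$ is a finite $p$-group for every $n\ge1$; (2) $\theta_1(A)\le\mathrm{Aut}(L_1^p(G))$ is a finite $p$-group if and only if $\sigma_n(A)\le\mathrm{Aut}(G/\gamma_n^p(G))$ is a finite $p$-group for every $n\ge1$.
   Context: The lower $p$-central filtration of $G$ is $\gamma_1^p(G)=G$, $\gamma_{n+1}^p(G)=(\gamma_n^p(G))^p[G,\gamma_n^p(G)]$, where $H^p=\langle h^p: h\in H\rangle$ and $[H,K]=\langle hkh^{-1}k^{-1}: h\in H,k\in K\rangle$. Set $L_n^p(G)=\gamma_n^p(G)/\gamma_{n+1}^p(G)$. Each $\gamma_n^p(G)$ is characteristic in $G$, so there are natural homomorphisms $\theta_n:\mathrm{Aut}(G)\to\mathrm{Aut}(L_n^p(G))$ and $\sigma_n:\mathrm{Aut}(G)\to\mathrm{Aut}(G/\gamma_n^p(G))$ induced by restriction and passage to quotients. *)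

From HB Require Import structures.
From mathcomp Require Import all_boot.
From mathcomp Require Import boolp classical_sets cardinality.

Set Implicit Arguments.
Unset Strict Implicit.
Unset Printing Implicit Defensive.

Local Open Scope classical_set_scope.
Local Open Scope group_scope.

Section LowerPCentral.
Variable G : groupType.

Definition is_subgroup (H : set G) : Prop :=
  [/\ H 1, (forall x y, H x -> H y -> H (x * y)) & (forall x, H x -> H x^-1)].

Definition gen (S : set G) : set G :=
  fun x => forall H, is_subgroup H -> S `<=` H -> H x.

Definition finitely_generated : Prop :=
  exists s : seq G, gen [set x | x \in s] = setT.

Definition pow_sub (p : nat) (H : set G) : set G :=
  gen [set x ^+ p | x in H].

Definition comm_sub (H K : set G) : set G :=
  gen (fun z => exists h k, [/\ H h, K k & z = h * k * h^-1 * k^-1]).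

Definition prod_set (H K : set G) : set G :=
  fun z => exists h k, [/\ H h, K k & z = h * k].

(* lpc_aux p n = gamma_{n+1}^p(G) *)
Fixpoint lpc_aux (p : nat) (n : nat) : set G :=
  match n with
  | 0 => setT
  | m.+1 => prod_set (pow_sub p (lpc_aux p m)) (comm_sub setT (lpc_aux p m))
  end.

(* lpc p n = gamma_n^p(G) for n >= 1 (and lpc p 0 = G by convention) *)
Definition lpc (p n : nat) : set G := lpc_aux p n.-1.

Definition is_aut (f : G -> G) : Prop :=
  (forall x y, f (x * y) = f x * f y) /\ bijective f.

Definition aut_subgroup (A : set (G -> G)) : Prop :=
  [/\ A `<=` is_aut, A id,
      (forall f g, A f -> A g -> A (f \o g)) &
      (forall f, A f -> exists g, [/\ A g, cancel f g & cancel g f])].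

(* The element theta_n(f) of Aut(L_n^p(G)), L_n = gamma_n / gamma_{n+1}, is
   encoded by the map  x |-> theta_n(f)(x gamma_{n+1}) = f(x) gamma_{n+1}
   on x in gamma_n (cosets as subsets of G; the empty set off gamma_n).
   This encoding is injective, so theta_image p n A is in bijection with
   the group theta_n(A). *)
Definition theta_image (p n : nat) (A : set (G -> G)) : set (G -> set G) :=
  [set (fun x => [set y | lpc p n x /\ lpc p n.+1 ((f x)^-1 * y)]) | f in A].

(* Likewise sigma_n(f) in Aut(G / gamma_n) is encoded by
   x |-> sigma_n(f)(x gamma_n) = f(x) gamma_n. *)
Definition sigma_image (p n : nat) (A : set (G -> G)) : set (G -> set G) :=
  [set (fun x => [set y | lpc p n ((f x)^-1 * y)]) | f in A].

End LowerPCentral.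

Definition finite_pgroup {X : Type} (p : nat) (T : set X) : Prop :=
  exists k : nat, card_eq T `I_(p ^ k).

(* An automorphism acting trivially on L_1 = G/gamma_2 acts trivially on every
   layer gamma_n/gamma_(n+1): the only non-obvious input is
   [gamma_2, gamma_n] <= gamma_(n+2), which follows from the Hall-Witt identity.
   If it also acts trivially on G/gamma_(n+1), its p-th power acts trivially on
   G/gamma_(n+2).  Hence if f^(p^a) is trivial on L_1, then f^(p^(a+n)) is
   trivial on G/gamma_(n+2).  Since G is finitely generated, every layer is
   spanned by finitely many elements of order dividing p modulo the next one,
   so every G/gamma_n is finite.  Thus theta_n(A) and sigma_n(A) act faithfully
   on finite sets of cosets, all their elements have p-power order, and Cauchy's
   theorem makes them p-groups.  The converses hold since sigma_2 = theta_1. *)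

From HB Require Import structures.
From mathcomp Require Import all_boot.
From mathcomp Require Import boolp classical_sets cardinality.
From mathcomp Require Import fingroup perm pgroup cyclic.

Set Implicit Arguments.
Unset Strict Implicit.
Unset Printing Implicit Defensive.
Local Open Scope classical_set_scope.
Local Open Scope group_scope.

Ltac gnorm := rewrite /commg /conjg ?invg1 ?invgM ?invgK ?mulgA;
  repeat rewrite ?invg1 ?mulgK ?mulgVK ?mulgV ?mulVg ?mul1g ?mulg1 ?mulgA.

Section Endomorphisms.
Variables (G : groupType) (f : G -> G).
Hypothesis fM : {morph f : x y / x * y}.

Lemma gmorph1 : f 1 = 1.
Proof. by apply: (mulgI (f 1)); rewrite -fM !mulg1. Qed.

Lemma gmorphV x : f x^-1 = (f x)^-1.
Proof. by apply: (mulgI (f x)); rewrite -fM !mulgV gmorph1. Qed.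

Lemma gmorphX x n : f (x ^+ n) = f x ^+ n.
Proof. by elim: n => [|n IHn]; rewrite ?expg0 ?gmorph1 // !expgS fM IHn. Qed.

Lemma gmorphR x y : f [~ x, y] = [~ f x, f y].
Proof. by rewrite /commg /conjg !fM !gmorphV. Qed.

Lemma gmorph_iter n : {morph iter n f : x y / x * y}.
Proof. by elim: n => [//|n IHn] x y /=; rewrite IHn fM. Qed.

End Endomorphisms.

Section Subgroups.
Variable G : groupType.
Implicit Types (H K S T : set G) (f : G -> G) (g x y z c : G).

Lemma subgroup1 H : is_subgroup H -> H 1. Proof. by case. Qed.

Lemma subgroupM H x y : is_subgroup H -> H x -> H y -> H (x * y).
Proof. by case=> _ + _; apply. Qed.

Lemma subgroupV H x : is_subgroup H -> H x -> H x^-1.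
Proof. by case=> _ _; apply. Qed.

Lemma subgroupX H x n : is_subgroup H -> H x -> H (x ^+ n).
Proof.
move=> sH Hx; elim: n => [|n IHn]; first by rewrite expg0; apply: subgroup1.
by rewrite expgS; apply: subgroupM.
Qed.

Lemma gen_subgroup S : is_subgroup (gen S).
Proof.
split=> [H sH _|x y Sx Sy H sH SH|x Sx H sH SH]; first exact: subgroup1.
  by apply: subgroupM; [|apply: Sx|apply: Sy].
by apply: subgroupV; [|apply: Sx].
Qed.

Lemma sub_gen S : S `<=` gen S.
Proof. by move=> x Sx H _; apply. Qed.

Lemma gen_min S H : is_subgroup H -> S `<=` H -> gen S `<=` H.
Proof. by move=> sH SH x; apply. Qed.

Lemma preimage_subgroup f H :
  {morph f : x y / x * y} -> is_subgroup H -> is_subgroup (f @^-1` H).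
Proof.
move=> fM sH; split=> [|x y|x] /=; first by rewrite gmorph1 //; apply: subgroup1.
  by rewrite fM; apply: subgroupM.
by rewrite gmorphV //; apply: subgroupV.
Qed.

Lemma gen_preimage f S T :
  {morph f : x y / x * y} -> S `<=` f @^-1` T -> gen S `<=` f @^-1` gen T.
Proof.
move=> fM ST; apply: gen_min (preimage_subgroup fM (gen_subgroup T)) _.
by move=> x /ST /= /sub_gen.
Qed.

Lemma gen_all (s : seq G) H : gen [set x | x \in s] = setT ->
  is_subgroup H -> (forall g, g \in s -> H g) -> forall g, H g.
Proof.
move=> gen_s sH sH' g; have : gen [set x | x \in s] g by rewrite gen_s.
by apply: gen_min sH _ g => x /sH'.
Qed.

Definition normal H := is_subgroup H /\ forall g x, H x -> H (x ^ g).

Lemma prod_set_normal H K : normal H -> normal K -> normal (prod_set H K).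
Proof.
move=> [sH nH] [sK nK]; split; first split.
- by exists 1, 1; split; rewrite ?mulg1 //; apply: subgroup1.
- move=> _ _ [h [k [Hh Kk ->]]] [h' [k' [Hh' Kk' ->]]].
  exists (h * h'), (k ^ h' * k'); split; first exact: subgroupM.
  + by apply: subgroupM => //; apply: nK.
  + by gnorm.
- move=> _ [h [k [Hh Kk ->]]]; exists h^-1, (k^-1 ^ h^-1); split.
  + exact: subgroupV.
  + by apply: nK; apply: subgroupV sK Kk.
  + by gnorm.
- move=> g _ [h [k [Hh Kk ->]]]; exists (h ^ g), (k ^ g).
  by split; [exact: nH|exact: nK|rewrite conjMg].
Qed.

Definition eqmod H x y := H (x^-1 * y).

Lemma eqmod_refl H x : is_subgroup H -> eqmod H x x.
Proof. by rewrite /eqmod mulVg; apply: subgroup1. Qed.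

Lemma eqmod_sym H x y : is_subgroup H -> eqmod H x y -> eqmod H y x.
Proof. by move=> sH /(subgroupV sH); rewrite /eqmod invgM invgK. Qed.

Lemma eqmod_trans H x y z : is_subgroup H ->
  eqmod H x y -> eqmod H y z -> eqmod H x z.
Proof. by move=> sH Hxy /(subgroupM sH Hxy); rewrite /eqmod mulgA mulgK. Qed.

Lemma eqmod_mem H x y : is_subgroup H -> eqmod H x y -> H x -> H y.
Proof. by move=> sH Hxy Hx; rewrite -(mulKVg x y); apply: subgroupM. Qed.

Lemma eqmod_mulr H x c : H c -> eqmod H x (x * c).
Proof. by rewrite /eqmod mulKg. Qed.

Lemma eqmod_mull H x c : normal H -> H c -> eqmod H (c * x) x.
Proof.
move=> [sH nH] Hc; rewrite /eqmod invgM (_ : _ * x = c^-1 ^ x); last by gnorm.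
by apply: nH; apply: subgroupV.
Qed.

Lemma eqmodM H x x' y y' : normal H ->
  eqmod H x x' -> eqmod H y y' -> eqmod H (x * y) (x' * y').
Proof.
move=> [sH nH] Hx Hy; rewrite /eqmod (_ : _ * _ = (x^-1 * x') ^ y * (y^-1 * y')).
  by apply: subgroupM => //; apply: nH.
by gnorm.
Qed.

Lemma eqmodV H x y : normal H -> eqmod H x y -> eqmod H x^-1 y^-1.
Proof.
move=> [sH nH] Hxy; rewrite /eqmod (_ : _ * _ = (x^-1 * y)^-1 ^ y^-1); last by gnorm.
by apply: nH; apply: subgroupV.
Qed.

Lemma eqmodX H x y n : normal H -> eqmod H x y -> eqmod H (x ^+ n) (y ^+ n).
Proof.
move=> nH Hxy; elim: n => [|n IHn]; first by rewrite !expg0; apply: eqmod_refl; case: nH.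
by rewrite !expgS; apply: eqmodM.
Qed.

Lemma eqmod_morph H f x y : {morph f : x y / x * y} ->
  (forall z, H z -> H (f z)) -> eqmod H x y -> eqmod H (f x) (f y).
Proof. by move=> fM fH /fH; rewrite /eqmod fM gmorphV. Qed.

Lemma hall_witt_normal H x y z : normal H ->
  H [~ [~ y, z^-1], x] -> H [~ [~ z, x^-1], y] -> H [~ [~ x, y^-1], z].
Proof.
move=> [sH nH] Hy Hz; rewrite -(conjgK y [~ _, z]); apply: (nH).
rewrite (_ : _ ^ y = ([~ [~ y, z^-1], x] ^ z * [~ [~ z, x^-1], y] ^ x)^-1).
  by apply: subgroupV => //; apply: subgroupM => //; apply: nH.
(* the Hall-Witt identity *)
by gnorm.
Qed.

End Subgroups.

Section LowerPCentralSeries.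
Variables (G : groupType) (p : nat).
(* [gam n] is gamma_(n+1)^p(G). *)
Local Notation gam := (@lpc_aux G p).
Implicit Types (H : set G) (f : G -> G) (a c g h x y : G).

Lemma lpc_fully_invariant n : normal (gam n) /\
  forall f, {morph f : x y / x * y} -> forall x, gam n x -> gam n (f x).
Proof.
elim: n => [|n [nN fN]]; first by split; first split.
have fP f : {morph f : x y / x * y} ->
    pow_sub p (gam n) `<=` f @^-1` pow_sub p (gam n).
  move=> fM; apply: gen_preimage => // _ [y Ny <-] /=.
  by exists (f y); [apply: fN|rewrite gmorphX].
have fC f : {morph f : x y / x * y} ->
    comm_sub setT (gam n) `<=` f @^-1` comm_sub setT (gam n).
  move=> fM; apply: gen_preimage => // _ [h [k [_ Nk ->]]] /=.
  exists (f h), (f k); split=> //; first exact: fN.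
  by rewrite !fM !(gmorphV fM).
have fNS f : {morph f : x y / x * y} -> forall x, gam n.+1 x -> gam n.+1 (f x).
  move=> fM _ [h [k [Ph Ck ->]]]; exists (f h), (f k).
  by split; [apply: fP|apply: fC|apply: fM].
split=> //; apply: prod_set_normal; split=> [|g]; try exact: gen_subgroup.
- by apply: fP => x y; apply: conjMg.
- by apply: fC => x y; apply: conjMg.
Qed.

Lemma lpc_normal n : normal (gam n).
Proof. by case: (lpc_fully_invariant n). Qed.

Lemma lpc_subgroup n : is_subgroup (gam n).
Proof. by case: (lpc_normal n). Qed.

Lemma lpc_morph n f x : {morph f : x y / x * y} -> gam n x -> gam n (f x).
Proof. by move=> fM; case: (lpc_fully_invariant n) => _; apply. Qed.

Lemma lpc1 n : gam n 1. Proof. exact: subgroup1 (lpc_subgroup n). Qed.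

Lemma lpcM n x y : gam n x -> gam n y -> gam n (x * y).
Proof. exact: subgroupM (lpc_subgroup n). Qed.

Lemma lpcV n x : gam n x -> gam n x^-1.
Proof. exact: subgroupV (lpc_subgroup n). Qed.

Lemma lpcX n x k : gam n x -> gam n (x ^+ k).
Proof. exact: subgroupX (lpc_subgroup n). Qed.

Lemma lpcJ n x g : gam n x -> gam n (x ^ g).
Proof. by case: (lpc_normal n) => _; apply. Qed.

Lemma lpc_expp n x : gam n x -> gam n.+1 (x ^+ p).
Proof.
move=> Nx; exists (x ^+ p), 1; rewrite mulg1; split=> //.
  by apply: sub_gen; exists x.
exact: subgroup1 (gen_subgroup _).
Qed.

Lemma lpc_commgr n g x : gam n x -> gam n.+1 [~ g, x].
Proof.
move=> Nx; exists 1, [~ g, x]; rewrite mul1g; split=> //.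
  exact: subgroup1 (gen_subgroup _).
by apply: sub_gen; exists g^-1, x^-1; split=> //; [apply: lpcV|gnorm].
Qed.

Lemma lpc_commgl n g x : gam n x -> gam n.+1 [~ x, g].
Proof. by rewrite -invgR => /(lpc_commgr g) /lpcV. Qed.

Lemma lpc_min n H : is_subgroup H ->
    (forall x, gam n x -> H (x ^+ p)) -> (forall g x, gam n x -> H [~ g, x]) ->
  gam n.+1 `<=` H.
Proof.
move=> sH Hp Hc _ [h [k [Ph Ck ->]]]; apply: subgroupM => //.
  by apply: gen_min Ph => // _ [y Ny <-]; apply: Hp.
apply: gen_min Ck => // _ [g [y [_ Ny ->]]].
by rewrite (_ : _ * _ = [~ g^-1, y^-1]); [apply/Hc/lpcV|gnorm].
Qed.

Lemma lpc_decr n : gam n.+1 `<=` gam n.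
Proof.
apply: lpc_min (lpc_subgroup n) _ _ => [x|g x] Nx; first exact: lpcX.
by rewrite commgEr; apply: lpcM (lpcJ _ (lpcV Nx)) Nx.
Qed.

Lemma lpc_commute_mod n g c : gam n c -> eqmod (gam n.+1) (g * c) (c * g).
Proof.
by move=> Nc; rewrite /eqmod (_ : _ * _ = [~ c, g]); [apply: lpc_commgl|gnorm].
Qed.

Lemma lpc_conj_mod n g c : gam n c -> eqmod (gam n.+1) (c ^ g) c.
Proof.
by move=> Nc; rewrite /eqmod (_ : _ * _ = [~ g, c]); [apply: lpc_commgr|gnorm].
Qed.

Lemma expgMn_mod n h c k : gam n c ->
  eqmod (gam n.+1) ((h * c) ^+ k) (h ^+ k * c ^+ k).
Proof.
move=> Nc; have sN := lpc_subgroup n.+1; have nN := lpc_normal n.+1.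
elim: k => [|k IHk]; first by rewrite !expg0 mulg1; apply: eqmod_refl.
rewrite !expgSr; apply: (eqmod_trans sN (eqmodM nN IHk (eqmod_refl _ sN))).
rewrite -!mulgA; apply: (eqmodM nN (eqmod_refl _ sN)).
rewrite !mulgA; apply: (eqmodM nN _ (eqmod_refl _ sN)).
exact/(eqmod_sym sN)/lpc_commute_mod/lpcX.
Qed.

Lemma expp_mulr_mod n h c : gam n c -> eqmod (gam n.+1) ((h * c) ^+ p) (h ^+ p).
Proof.
move=> Nc; apply: eqmod_trans (lpc_subgroup _) (expgMn_mod h p Nc) _.
by apply: (eqmod_sym (lpc_subgroup _)); apply: eqmod_mulr; apply: lpc_expp.
Qed.

Lemma commgMr_mod n x y c : gam n c -> eqmod (gam n.+1) [~ x, y * c] [~ x, y].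
Proof.
move=> Nc; rewrite (_ : [~ x, y * c] = [~ x, c] * [~ x, y] * [~ [~ x, y], c]).
  apply: eqmod_trans (lpc_subgroup _) _ (eqmod_mull _ (lpc_normal _) (lpc_commgr x Nc)).
  by apply: (eqmod_sym (lpc_subgroup _)); apply: eqmod_mulr; apply: lpc_commgr.
by gnorm.
Qed.

Lemma commgXl_mod n x h k : gam n h ->
  eqmod (gam n.+2) [~ x ^+ k, h] ([~ x, h] ^+ k).
Proof.
move=> Nh; have sN := lpc_subgroup n.+2.
elim: k => [|k IHk]; first by rewrite !expg0 comm1g; apply: eqmod_refl.
rewrite !expgSr (_ : [~ x ^+ k * x, h] = [~ x ^+ k, h] ^ x * [~ x, h]); last by gnorm.
apply: (eqmodM (lpc_normal _) _ (eqmod_refl _ sN)).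
exact: eqmod_trans sN (lpc_conj_mod _ (lpc_commgr _ Nh)) IHk.
Qed.

Lemma lpc1_commg j a h : gam 1 a -> gam j h -> gam j.+2 [~ a, h].
Proof.
move: a h; pose H a := forall h, gam j h -> gam j.+2 [~ a, h].
have sH : is_subgroup H.
  split=> [h _|a1 a2 Ha1 Ha2 h Nh|a1 Ha1 h Nh]; first by rewrite comm1g; apply: lpc1.
    rewrite (_ : [~ a1 * a2, h] = [~ a1, h] ^ a2 * [~ a2, h]); last by gnorm.
    by apply: lpcM; [apply/lpcJ/Ha1|apply: Ha2].
  rewrite (_ : [~ a1^-1, h] = ([~ a1, h]^-1) ^ a1^-1); last by gnorm.
  by apply/lpcJ/lpcV; apply: Ha1.
move=> a h N1a; apply: (lpc_min sH) a N1a h => [x _|g x _] h Nh.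
  have Nxh : gam j.+1 [~ x, h] by apply: lpc_commgr.
  apply: (eqmod_mem (lpc_subgroup _) _ (lpc_expp Nxh)).
  exact: eqmod_sym (lpc_subgroup _) (commgXl_mod x p Nh).
rewrite -[x]invgK; apply: hall_witt_normal (lpc_normal _) _ _.
  exact/lpc_commgl/lpc_commgr/lpcV.
exact/lpc_commgl/lpc_commgl.
Qed.

Section TrivialOnFirstLayer.
Variable f : G -> G.
Hypothesis fM : {morph f : x y / x * y}.
Hypothesis f_triv1 : forall x, eqmod (gam 1) x (f x).

Lemma lpc_trivial_action n x : gam n x -> eqmod (gam n.+1) x (f x).
Proof.
elim: n x => [x _|n IHn]; first exact: f_triv1.
pose H x := gam n.+1 x /\ eqmod (gam n.+2) x (f x).
have sH : is_subgroup H.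
  have sN := lpc_subgroup n.+2; have nN := lpc_normal n.+2.
  split=> [|x y [Nx ex] [Ny ey]|x [Nx ex]].
  - by split; [apply: lpc1|rewrite gmorph1 //; apply: eqmod_refl].
  - by split; [apply: lpcM|rewrite fM; apply: eqmodM].
  - split; first exact: lpcV.
    by rewrite (gmorphV fM); apply: eqmodV.
move=> x Nx; suff [] : H x by [].
apply: (lpc_min sH) x Nx => [y Ny|g y Ny]; split.
- exact: lpc_expp.
- rewrite (gmorphX fM) -(mulKVg y (f y)); apply: (eqmod_sym (lpc_subgroup _)).
  exact: expp_mulr_mod (IHn y Ny).
- exact: lpc_commgr.
- rewrite (gmorphR fM) -(mulKVg y (f y)) -(mulKVg g (f g)).
  apply: (eqmod_sym (lpc_subgroup _)).
  apply: (eqmod_trans (lpc_subgroup _) (commgMr_mod _ _ (IHn y Ny))).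
  (* f g = g d with d in gamma_2, and [gamma_2, gamma_(n+1)] <= gamma_(n+3) *)
  rewrite conjgCV (_ : [~ _ * g, y] = [~ (g^-1 * f g) ^ g^-1, y] ^ g * [~ g, y]).
    apply: (eqmod_mull _ (lpc_normal _)); apply/lpcJ/lpc1_commg => //.
    exact/lpcJ/f_triv1.
  by gnorm.
Qed.

Lemma iter_trivial_lpc1 k x : eqmod (gam 1) x (iter k f x).
Proof.
elim: k x => [|k IHk] x; first exact: eqmod_refl (lpc_subgroup _).
exact: eqmod_trans (lpc_subgroup _) (IHk x) (f_triv1 _).
Qed.

Lemma expp_trivial_action j : (forall x, eqmod (gam j.+1) x (f x)) ->
  forall x, eqmod (gam j.+2) x (iter p f x).
Proof.
move=> fj x; have sN := lpc_subgroup j.+2; have nN := lpc_normal j.+2.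
have [c Nc fx] : exists2 c, gam j.+1 c & f x = x * c.
  by exists (x^-1 * f x); [apply: fj|rewrite mulKVg].
have fk k : eqmod (gam j.+2) (iter k f x) (x * c ^+ k).
  elim: k => [|k IHk]; first by rewrite expg0 mulg1; apply: eqmod_refl.
  have fN z : gam j.+2 z -> gam j.+2 (f z) by apply: lpc_morph.
  rewrite iterS; apply: (eqmod_trans sN (eqmod_morph fM fN IHk)).
  rewrite fM (gmorphX fM) fx expgS mulgA; apply: (eqmodM nN (eqmod_refl _ sN)).
  by apply: (eqmodX k nN); apply: (eqmod_sym sN); apply: lpc_trivial_action.
apply: (eqmod_trans sN (eqmod_mulr x (lpc_expp Nc))).
exact: eqmod_sym (fk p).
Qed.

End TrivialOnFirstLayer.

Lemma iter_expn_trivial_action f : {morph f : x y / x * y} ->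
    (forall x, eqmod (gam 1) x (f x)) ->
  forall j x, eqmod (gam j.+1) x (iter (p ^ j) f x).
Proof.
move=> fM f1; elim=> [|j IHj] x; first exact: f1.
rewrite expnS iterM; apply: expp_trivial_action IHj x.
  exact: gmorph_iter.
exact: iter_trivial_lpc1.
Qed.

Lemma lpc_commg_subgroup n u H : is_subgroup H ->
    (forall x y, eqmod (gam n.+2) x y -> H x -> H y) -> gam n u ->
  is_subgroup [set g | H [~ g, u]].
Proof.
move=> sH H_sat Nu; have sN := lpc_subgroup n.+2.
have Nu' g : gam n.+1 [~ g, u] by apply: lpc_commgr.
split=> [|a b Ha Hb|a Ha] /=; first by rewrite comm1g; apply: subgroup1.
  rewrite (_ : [~ a * b, u] = [~ a, u] ^ b * [~ b, u]); last by gnorm.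
  apply: H_sat (subgroupM sH Ha Hb).
  exact: eqmodM (lpc_normal _) (eqmod_sym sN (lpc_conj_mod _ (Nu' a))) (eqmod_refl _ sN).
rewrite (_ : [~ a^-1, u] = [~ a, u]^-1 ^ a^-1); last by gnorm.
apply: H_sat (subgroupV sH Ha).
exact/(eqmod_sym sN)/lpc_conj_mod/lpcV.
Qed.

Section FiniteIndex.
Hypothesis p_gt1 : 1 < p.

Fixpoint monomials (F : seq G) : seq G :=
  if F is a :: F' then [seq a ^+ e * y | e <- iota 0 p, y <- monomials F']
  else [:: 1].

Lemma mem_monomials_cons a F e y :
  e < p -> y \in monomials F -> a ^+ e * y \in monomials (a :: F).
Proof. by move=> ep yF; apply: allpairs_f; rewrite ?mem_iota. Qed.

Lemma monomials1 F : 1 \in monomials F.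
Proof.
elim: F => [|a F IHF]; first by rewrite inE.
by have := mem_monomials_cons a (ltnW p_gt1) IHF; rewrite expg0 mulg1.
Qed.

Lemma mem_monomials F a : a \in F -> a \in monomials F.
Proof.
elim: F => [//|b F IHF]; rewrite inE => /predU1P [->|/IHF aF].
  by have := mem_monomials_cons b p_gt1 (monomials1 F); rewrite expg1 mulg1.
by have := mem_monomials_cons b (ltnW p_gt1) aF; rewrite expg0 mul1g.
Qed.

Lemma monomials_lpc m F : (forall a, a \in F -> gam m a) ->
  forall y, y \in monomials F -> gam m y.
Proof.
elim: F => [_ y|a F IHF FN y] /=; first by rewrite inE => /eqP ->; apply: lpc1.
case/allpairsP=> -[e z] /= [_ zF ->]; apply: lpcM.
  by apply/lpcX/FN; rewrite inE eqxx.
by apply: IHF zF => b bF; apply: FN; rewrite inE bF orbT.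
Qed.

Lemma monomialsM m F : (forall a, a \in F -> gam m a) ->
  forall y y', y \in monomials F -> y' \in monomials F ->
  exists2 z, z \in monomials F & eqmod (gam m.+1) (y * y') z.
Proof.
have sN := lpc_subgroup m.+1; have nN := lpc_normal m.+1.
elim: F => [_ y y'|a F IHF FN y y'] /=.
  by rewrite !inE => /eqP -> /eqP ->; exists 1; rewrite ?inE // mulg1; apply: eqmod_refl.
have FN' b : b \in F -> gam m b by move=> bF; apply: FN; rewrite inE bF orbT.
have Na : gam m a by apply: FN; rewrite inE eqxx.
case/allpairsP=> -[e w] /= [_ wF ->]; case/allpairsP=> -[e' w'] /= [_ w'F ->].
have [z zF wwz] := IHF FN' w w' wF w'F.
exists (a ^+ ((e + e') %% p) * z).
  by apply: allpairs_f => //; rewrite mem_iota ltn_pmod // ltnW.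
apply: (eqmod_trans sN (y := a ^+ (e + e') * (w * w'))).
  rewrite (_ : a ^+ e * w * _ = a ^+ e * (w * a ^+ e') * w'); last by gnorm.
  rewrite expgD (_ : _ * (w * w') = a ^+ e * (a ^+ e' * w) * w'); last by gnorm.
  apply: (eqmodM nN _ (eqmod_refl _ sN)); apply: (eqmodM nN (eqmod_refl _ sN)).
  exact: eqmod_sym sN (lpc_commute_mod _ (monomials_lpc FN' wF)).
apply: (eqmodM nN _ wwz).
rewrite {1}(divn_eq (e + e') p) expgD mulnC expgM.
by apply: (eqmod_mull _ nN); apply/lpcX/lpc_expp.
Qed.

Definition monomial_class m F :=
  [set x | exists2 y, y \in monomials F & eqmod (gam m.+1) y x].

Lemma monomial_class_sat m F x y :
  eqmod (gam m.+1) x y -> monomial_class m F x -> monomial_class m F y.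
Proof.
by move=> xy [z zF zx]; exists z => //; apply: eqmod_trans (lpc_subgroup _) zx xy.
Qed.

Lemma mem_monomial_class m F a : a \in F -> monomial_class m F a.
Proof.
by move=> aF; exists a; [apply: mem_monomials|apply: eqmod_refl (lpc_subgroup _)].
Qed.

Lemma monomial_class_subgroup m F : (forall a, a \in F -> gam m a) ->
  is_subgroup (monomial_class m F).
Proof.
move=> FN; have sN := lpc_subgroup m.+1.
have M1 : monomial_class m F 1 by exists 1; [apply: monomials1|apply: eqmod_refl].
have MM x y : monomial_class m F x -> monomial_class m F y ->
    monomial_class m F (x * y).
  move=> [u uF ux] [v vF vy]; have [z zF uvz] := monomialsM FN uF vF.
  exists z => //; apply: eqmod_trans sN (eqmod_sym sN uvz) (eqmodM (lpc_normal _) ux vy).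
split=> // x [y yF yx].
have My k : monomial_class m F (y ^+ k).
  elim: k => [|k IHk]; first by rewrite expg0.
  by rewrite expgS; apply: MM => //; exists y => //; apply: eqmod_refl.
apply: monomial_class_sat (My p.-1); apply: eqmod_trans sN _ (eqmodV (lpc_normal _) yx).
rewrite /eqmod -invgM -expgS prednK ?(ltnW p_gt1) //; apply: lpcV.
exact/lpc_expp/(monomials_lpc FN).
Qed.

Lemma lpc_layer_monomials (s : seq G) : gen [set x | x \in s] = setT ->
  forall m, exists F : seq G,
    (forall a, a \in F -> gam m a) /\ gam m `<=` monomial_class m F.
Proof.
move=> gen_s; elim=> [|m [F [FN N_F]]].
  exists s; split=> // x _; apply: gen_all gen_s _ _ x.
    exact: monomial_class_subgroup.
  exact: mem_monomial_class.
set t := monomials F; have tN : forall u, u \in t -> gam m u.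
  exact: monomials_lpc.
(* the next layer is spanned by the p-th powers of representatives of this one
   and by their commutators with the generators *)
pose F' := [seq u ^+ p | u <- t] ++ [seq [~ g, u] | g <- s, u <- t].
have F'N a : a \in F' -> gam m.+1 a.
  rewrite mem_cat => /orP [/mapP [u /tN Nu ->]|/allpairsP [[g u] /= [_ /tN Nu ->]]].
    exact: lpc_expp.
  exact: lpc_commgr.
have sW := monomial_class_subgroup F'N.
exists F'; split=> //; apply: (lpc_min sW) => [h|g h] /N_F [u ut uh].
  rewrite -(mulKVg u h).
  apply: monomial_class_sat (eqmod_sym (lpc_subgroup _) (expp_mulr_mod u uh)) _.
  by apply: mem_monomial_class; rewrite mem_cat (map_f (fun u => u ^+ p)).
rewrite -(mulKVg u h).
apply: monomial_class_sat (eqmod_sym (lpc_subgroup _) (commgMr_mod g u uh)) _.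
move: g; apply: gen_all gen_s _ _.
  by apply: lpc_commg_subgroup sW _ (tN u ut) => x y; apply: monomial_class_sat.
by move=> g gs; apply: mem_monomial_class; rewrite mem_cat allpairs_f ?orbT.
Qed.

Lemma lpc_finite_index : finitely_generated G ->
  forall m, exists r : seq G, forall x, exists2 y, y \in r & eqmod (gam m) y x.
Proof.
case=> s gen_s; elim=> [|m [r r_cover]].
  by exists [:: 1] => x; exists 1; rewrite ?inE.
have [F [_ N_F]] := lpc_layer_monomials gen_s m.
exists [seq a * u | a <- r, u <- monomials F] => x.
have [a ar ax] := r_cover x; have [u uF uax] := N_F _ ax.
by exists (a * u); [apply: allpairs_f|rewrite /eqmod invgM -mulgA].
Qed.

End FiniteIndex.

End LowerPCentralSeries.

Local Open Scope card_scope.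

Lemma card_image_kernel (T U V : Type) (A : set T) (f : T -> U) (g : T -> V) :
    (forall x y, A x -> A y -> f x = f y <-> g x = g y) ->
  f @` A #= g @` A.
Proof.
move=> fg; have [[t0 At0]|A0] := pselect (exists t, A t); last first.
  have -> : A = set0 by apply/seteqP; split=> // t At; case: A0; exists t.
  by rewrite !image_set0; apply: card_eq00.
have [chi chiP] : {chi : U -> T & forall u, (f @` A) u -> A (chi u) /\ f (chi u) = u}.
  apply: (@choice _ _ (fun u t => (f @` A) u -> A t /\ f t = u)) => u.
  by have [[t At <-]|nu] := pselect ((f @` A) u); [exists t|exists t0].
have gchiI : {in f @` A &, injective (g \o chi)}.
  move=> _ _ /set_mem [x Ax <-] /set_mem [y Ay <-] /= eq_g.
  have [Ax' fx] := chiP (f x) (imageP _ Ax); have [Ay' fy] := chiP (f y) (imageP _ Ay).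
  by rewrite -fx -fy; apply/fg.
have <- : (g \o chi) @` (f @` A) = g @` A.
  apply/seteqP; split=> [_ [_ [x Ax <-] <-]|_ [x Ax <-]] /=.
    by have [Ax' _] := chiP (f x) (imageP _ Ax); exists (chi (f x)).
  exists (f x); first exact: imageP.
  by have [Ax' fx] := chiP (f x) (imageP _ Ax); apply/fg.
by rewrite card_eq_sym; apply: inj_card_eq.
Qed.

Lemma card_finset (T : finType) (S : {set T}) : [set x | x \in S] #= `I_#|S|.
Proof.
have -> : [set x | x \in S] = (@enum_val _ (mem S)) @` [set: 'I_#|S|].
  apply/seteqP; split=> [x /= xS|_ [i _ <-] /=]; last exact: enum_valP.
  by exists (enum_rank_in xS x) => //; apply: enum_rankK_in.
apply: card_eq_trans (card_esym card_II).
by apply: inj_card_eq => i j _ _; apply: enum_val_inj.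
Qed.

Section AutSubgroup.
Variables (G : groupType) (A : set (G -> G)).
Hypothesis A_aut : aut_subgroup A.

Lemma aut_morph f : A f -> {morph f : x y / x * y}.
Proof. by case: A_aut => A_is_aut _ _ _ /A_is_aut []. Qed.

Lemma aut_id : A id. Proof. by case: A_aut. Qed.

Lemma aut_comp f g : A f -> A g -> A (f \o g).
Proof. by case: A_aut => _ _ + _; apply. Qed.

Lemma aut_iter f n : A f -> A (iter n f).
Proof.
move=> Af; elim: n => [|n IHn]; first exact: aut_id.
by rewrite (_ : iter n.+1 f = f \o iter n f) //; apply: aut_comp.
Qed.

Lemma aut_eqmod_inj K f x y : (forall g, A g -> forall z, K z -> K (g z)) ->
  A f -> eqmod K (f x) (f y) -> eqmod K x y.
Proof.
move=> A_K Af; case: A_aut => _ _ _ /(_ f Af) [g [Ag fK _]].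
by move/(eqmod_morph (aut_morph Ag) (A_K g Ag)); rewrite !fK.
Qed.

End AutSubgroup.

Section PermRepresentation.
Variables (G : groupType) (K P : set G) (A : set (G -> G)) (r : seq G).
Hypotheses (K_subgroup : is_subgroup K) (A_aut : aut_subgroup A).
Hypothesis A_K : forall f, A f -> forall x, K x -> K (f x).
Hypothesis P_sat : forall x y, eqmod K x y -> P x -> P y.
Hypothesis A_P : forall f, A f -> forall x, P x -> P (f x).
Hypothesis r_cover : forall x, exists2 y, y \in r & eqmod K y x.

Local Notation k := (size r).+1.
Local Notation eqK := (eqmod K).

(* The classes of G modulo K are indexed by positions in [1 :: r]; the extra
   1 only makes ['I_k] inhabited. *)
Definition class_rep (i : 'I_k) : G := nth 1 (1 :: r) i.

Definition class_index x : 'I_k := odflt ord0 [pick i | `[< eqK (class_rep i) x >]].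

Lemma class_indexP x : eqK (class_rep (class_index x)) x.
Proof.
rewrite /class_index; case: pickP => [i /asboolP //|no_i].
have [y yr yx] := r_cover x; have yr1 : y \in 1 :: r by rewrite inE yr orbT.
have /asboolP[] := no_i (Ordinal (etrans (index_mem y (1 :: r)) yr1)).
by rewrite /class_rep nth_index.
Qed.

Lemma class_index_eq x y : class_index x = class_index y <-> eqK x y.
Proof.
split=> xy.
  apply: eqmod_trans K_subgroup (eqmod_sym K_subgroup (class_indexP x)) _.
  by rewrite xy; apply: class_indexP.
rewrite /class_index; congr odflt; apply: eq_pick => i.
apply/asboolP/asboolP => [ix|iy]; first exact: eqmod_trans K_subgroup ix xy.
exact: eqmod_trans K_subgroup iy (eqmod_sym K_subgroup xy).
Qed.

(* [perm_of f] permutes the canonical indices of the classes inside P as f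
   permutes these classes, and fixes all other indices. *)
Definition canonical_index (i : 'I_k) :=
  (class_index (class_rep i) == i) && `[< P (class_rep i) >].

Lemma canonical_class_index x : P x -> canonical_index (class_index x).
Proof.
move=> Px; rewrite /canonical_index.
have -> : class_index (class_rep (class_index x)) = class_index x.
  by apply/class_index_eq; apply: class_indexP.
by rewrite eqxx; apply/asboolP; apply: P_sat (eqmod_sym K_subgroup (class_indexP x)) Px.
Qed.

Lemma canonical_indexP i : canonical_index i -> P (class_rep i).
Proof. by case/andP=> _ /asboolP. Qed.

Definition perm_fun f i :=
  if canonical_index i then class_index (f (class_rep i)) else i.

Lemma perm_fun_inj f : A f -> injective (perm_fun f).
Proof.
move=> Af i j; rewrite /perm_fun.
have canon_f l : canonical_index l -> canonical_index (class_index (f (class_rep l))).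
  by move/canonical_indexP/(A_P Af)/canonical_class_index.
case ci: (canonical_index i); case cj: (canonical_index j) => //.
- move: ci cj => /andP [/eqP ei _] /andP [/eqP ej _] /class_index_eq fij.
  by rewrite -ei -ej; apply/class_index_eq; apply: (aut_eqmod_inj A_aut A_K Af fij).
- by move=> fij; move: (canon_f i ci); rewrite fij cj.
- by move=> fij; move: (canon_f j cj); rewrite -fij ci.
Qed.

Definition perm_of f : {perm 'I_k} :=
  if pselect (injective (perm_fun f)) is left inj then perm inj else 1.

Lemma perm_ofE f i : A f -> perm_of f i = perm_fun f i.
Proof.
move=> Af; rewrite /perm_of; case: pselect => [inj|/(_ (perm_fun_inj Af))//].
by rewrite permE.
Qed.

Lemma perm_of_comp f g : A f -> A g -> perm_of (f \o g) = perm_of g * perm_of f.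
Proof.
move=> Af Ag; apply/permP => i; rewrite permM !perm_ofE //; last exact: aut_comp.
rewrite /perm_fun; case ci: (canonical_index i); last by rewrite ci.
rewrite canonical_class_index /=; last exact/(A_P Ag)/canonical_indexP.
apply/class_index_eq/(eqmod_morph (aut_morph A_aut Af) (A_K Af)).
exact/(eqmod_sym K_subgroup)/class_indexP.
Qed.

Lemma perm_of_id : perm_of id = 1.
Proof.
apply/permP => i; rewrite perm1 perm_ofE; last exact: aut_id.
by rewrite /perm_fun; case: ifP => // /andP [/eqP].
Qed.

Lemma perm_of_iter f n : A f -> perm_of (iter n f) = perm_of f ^+ n.
Proof.
move=> Af; elim: n => [|n IHn]; first exact: perm_of_id.
rewrite (_ : iter n.+1 f = f \o iter n f) // perm_of_comp ?IHn ?expgSr //.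
exact: aut_iter.
Qed.

Lemma perm_of_eq f g : A f -> A g ->
  perm_of f = perm_of g <-> forall x, P x -> eqK (f x) (g x).
Proof.
move=> Af Ag; have fK := eqmod_morph (aut_morph A_aut Af) (A_K Af).
have gK := eqmod_morph (aut_morph A_aut Ag) (A_K Ag).
split=> [fg x Px|fg].
  move/(congr1 (fun s : {perm 'I_k} => s (class_index x))): fg.
  rewrite !perm_ofE // /perm_fun canonical_class_index // => /class_index_eq fgx.
  apply: eqmod_trans K_subgroup (eqmod_sym K_subgroup (fK _ _ (class_indexP x))) _.
  exact: eqmod_trans K_subgroup fgx (gK _ _ (class_indexP x)).
apply/permP => i; rewrite !perm_ofE // /perm_fun.
by case: ifP => // /canonical_indexP Pi; apply/class_index_eq/fg.
Qed.

Definition perm_image : {set {perm 'I_k}} :=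
  [set t | `[< exists2 f, A f & perm_of f = t >]]%SET.

Lemma perm_image_group : group_set perm_image.
Proof.
apply/group_setP; split.
  by rewrite inE; apply/asboolP; exists id; [apply: aut_id|apply: perm_of_id].
move=> s t; rewrite !inE => /asboolP [f Af <-] /asboolP [g Ag <-].
by apply/asboolP; exists (g \o f); [apply: aut_comp|rewrite perm_of_comp].
Qed.

Lemma perm_of_image f : A f -> perm_of f \in perm_image.
Proof. by move=> Af; rewrite inE; apply/asboolP; exists f. Qed.

Lemma perm_of_expg_card f : A f -> perm_of f ^+ #|perm_image| = 1.
Proof.
move=> Af; apply/eqP; rewrite -order_dvdn.
exact: (@order_dvdG _ (Group perm_image_group)) (perm_of_image Af).
Qed.

Lemma card_perm_image_pnat p : prime p ->
    (forall f, A f -> exists e, perm_of f ^+ (p ^ e) = 1) ->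
  exists a, #|perm_image| = (p ^ a)%N.
Proof.
move=> p_pr f_pexp; suff /p_natP [a ->] : p.-group (Group perm_image_group) by exists a.
apply/pgroupP => q q_pr /(Cauchy q_pr) [_ /[!inE] /asboolP [f Af <-] f_q].
have [e fe] := f_pexp f Af.
have : q %| p ^ e by rewrite -f_q order_dvdn fe.
by rewrite Euclid_dvdX // (dvdn_prime2 q_pr p_pr) => /andP [].
Qed.

Variables (U : Type) (phi : (G -> G) -> U).
Hypothesis phi_ker : forall f g, A f -> A g ->
  phi f = phi g <-> forall x, P x -> eqK (f x) (g x).

Lemma card_image_perm : phi @` A #= `I_#|perm_image|.
Proof.
apply: card_eq_trans (card_finset perm_image).
have -> : [set t | t \in perm_image] = perm_of @` A.
  apply/seteqP; split=> [t|_ [f Af <-]] /=; last exact: perm_of_image.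
  by rewrite inE => /asboolP [f Af <-]; exists f.
by apply: card_image_kernel => f g Af Ag; rewrite phi_ker // perm_of_eq.
Qed.

Lemma image_pgroupP p : prime p -> finite_pgroup p (phi @` A) <->
  forall f, A f -> exists e, forall x, P x -> eqK x (iter (p ^ e) f x).
Proof.
have iterP f e : A f -> (forall x, P x -> eqK x (iter e f x)) <-> perm_of f ^+ e = 1.
  move=> Af; rewrite -perm_of_iter // -perm_of_id perm_of_eq.
  - by split=> fe x Px; apply: (eqmod_sym K_subgroup); apply: fe.
  - exact: aut_iter.
  - exact: aut_id.
move=> p_pr; split=> [[a /(card_eq_trans (card_esym card_image_perm))] | f_pexp].
  move/card_eq_II => card_a f Af; exists a; apply/iterP => //.
  by rewrite -card_a perm_of_expg_card.
have [|a card_a] := card_perm_image_pnat p_pr.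
  by move=> f /[dup] /f_pexp [e fe] Af; exists e; apply/iterP.
by exists a; rewrite -card_a; apply: card_image_perm.
Qed.

End PermRepresentation.

Lemma coset_map_in_eq (G : groupType) (Q K : set G) (f g : G -> G) :
    is_subgroup K ->
  (fun x => [set y | Q x /\ K ((f x)^-1 * y)]) =
    (fun x => [set y | Q x /\ K ((g x)^-1 * y)]) <->
  forall x, Q x -> eqmod K (f x) (g x).
Proof.
move=> sK; split=> [fg x Qx|fg].
  suff [] : Q x /\ K ((f x)^-1 * g x) by [].
  have /= -> := congr1 (fun F => F x (g x)) fg.
  by rewrite mulVg; split=> //; apply: subgroup1.
apply: funext => x; apply/seteqP; split=> y /= [Qx xy]; split=> //.
  exact: eqmod_trans sK (eqmod_sym sK (fg x Qx)) xy.
exact: eqmod_trans sK (fg x Qx) xy.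
Qed.

Lemma coset_map_eq (G : groupType) (K : set G) (f g : G -> G) :
    is_subgroup K ->
  (fun x => [set y | K ((f x)^-1 * y)]) = (fun x => [set y | K ((g x)^-1 * y)]) <->
  forall x, setT x -> eqmod K (f x) (g x).
Proof.
move=> sK; rewrite -(coset_map_in_eq setT f g sK).
have setTK h : (fun x => [set y | K ((h x)^-1 * y)]) =
               (fun x => [set y | setT x /\ K ((h x)^-1 * y)]).
  by apply: funext => x; apply/seteqP; split=> y //= [].
by rewrite !setTK.
Qed.

Section Corollary.
Variables (G : groupType) (p : nat) (A : set (G -> G)).
Hypotheses (p_prime : prime p) (G_fg : finitely_generated G).
Hypothesis A_aut : aut_subgroup A.
Local Notation gam := (@lpc_aux G p).

Lemma lpc_aut m f : A f -> forall x, gam m x -> gam m (f x).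
Proof. by move=> Af x; apply: lpc_morph (aut_morph A_aut Af). Qed.

Lemma theta_image_pgroupP n : finite_pgroup p (theta_image p n.+1 A) <->
  forall f, A f -> exists e, forall x, gam n x -> eqmod (gam n.+1) x (iter (p ^ e) f x).
Proof.
have [r r_cover] := lpc_finite_index (prime_gt1 p_prime) G_fg n.+1.
apply: (image_pgroupP (phi := fun f x => [set y | gam n x /\ gam n.+1 ((f x)^-1 * y)])
  (lpc_subgroup G p n.+1) A_aut (@lpc_aut n.+1) _ (@lpc_aut n) r_cover _ p_prime).
  by move=> x y /(@lpc_decr G p n) xy; apply: eqmod_mem (lpc_subgroup G p n) xy.
by move=> f g _ _; apply: coset_map_in_eq (lpc_subgroup G p n.+1).
Qed.

Lemma sigma_image_pgroupP n : finite_pgroup p (sigma_image p n.+1 A) <->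
  forall f, A f -> exists e, forall x, eqmod (gam n) x (iter (p ^ e) f x).
Proof.
have [r r_cover] := lpc_finite_index (prime_gt1 p_prime) G_fg n.
rewrite (image_pgroupP (P := setT) (phi := fun f x => [set y | gam n ((f x)^-1 * y)])
  (lpc_subgroup G p n) A_aut (@lpc_aut n) _ _ r_cover _ p_prime) //.
- by split=> fe f /fe [e fex]; exists e => x *; apply: fex.
- by move=> f g _ _; apply: coset_map_eq (lpc_subgroup G p n).
Qed.

Lemma lpc_pgroup_expn : finite_pgroup p (theta_image p 1 A) ->
  forall n f, A f -> exists e, forall x, eqmod (gam n) x (iter (p ^ e) f x).
Proof.
move=> /(theta_image_pgroupP 0) theta1 [|n] f Af; first by exists 0.
have [a fa] := theta1 f Af; exists (n + a) => x; rewrite expnD iterM.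
apply: iter_expn_trivial_action (gmorph_iter (aut_morph A_aut Af) _) _ n x.
by move=> y; apply: fa.
Qed.

End Corollary.

Lemma sigma_image2 (G : groupType) p (A : set (G -> G)) :
  sigma_image p 2 A = theta_image p 1 A.
Proof.
congr (_ @` _); apply/funext => f; apply/funext => x.
by apply/seteqP; split=> y //= [].
Qed.

Theorem corollary3p5 (p : nat) (G : groupType) (A : set (G -> G)) :
  prime p -> finitely_generated G -> aut_subgroup A ->
  (finite_pgroup p (theta_image p 1 A) <->
     (forall n : nat, (0 < n)%N -> finite_pgroup p (theta_image p n A))) /\
  (finite_pgroup p (theta_image p 1 A) <->
     (forall n : nat, (0 < n)%N -> finite_pgroup p (sigma_image p n A))).
Proof.
move=> p_prime G_fg A_aut; have expn := lpc_pgroup_expn p_prime G_fg A_aut.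
split; split=> [theta1 [//|n] _|all_n].
- apply/(theta_image_pgroupP p_prime G_fg A_aut) => f Af.
  by have [e fe] := expn theta1 n.+1 f Af; exists e => x _; apply: fe.
- exact: all_n.
- exact/(sigma_image_pgroupP p_prime G_fg A_aut)/expn.
- by rewrite -sigma_image2; apply: all_n.
Qed.
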